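(* Let $(A;A^+)$ be an $\mathbb{F}_1$-algebra pair and $(M,\le)$ a partially ordered $A$-module whose underlying $A$-module $M$ is projective. Then the $\mathbb{B}[A;A^+]$-module $\mathbb{B}(M,\le)$ is projective if and only if: (i) (lower finite) the downward closure (lower hull) of any finitely generated $A^+$-submodule of $M$ is a finitely generated $A^+$-submodule; and (ii) (lower saturated) if $D\subseteq M$ is an $A^+$-submodule which is a lower set, then $fD=\{fx:x\in D\}$ is a lower set for every $f\in A$.
   Context: An $\mathbb{F}_1$-algebra pair $(A;A^+)$ consists of a commutative monoid with zero $A$ (written multiplicatively) and a submonoid $A^+\subseteq A$ containing $0$; $A^+$ is assumed sharp (its only invertible element is $1$). An $A$-module is a pointed set (base point $0$) with an action of $A$ where $0\in A$ sends everything to $0$ and $0$ is fixed; an $A^+$-submodule of $M$ is a subset containing $0$ stable under $A^+$. $\mathbb{B}[A;A^+]$ is the idempotent semiring of finitely generated $A^+$-submodules of $A$, with $\vee$ = union and $+$ = elementwise product; $A$ acts on $\mathbb{B}[A;A^+]$-modules through $a\mapsto A^+a$. A partially ordered $A$-module is an $A$-module $M$ with a partial order such that (a) $fv\le gv$ for all $v\in M$, $g\in A$, $f\in A^+g$, and (b) $v\le w$ implies $fv\le fw$ for all $f\in A$. $\mathbb{B}(M,\le)$ is the set of $A^+$-submodules of $M$ that are lower sets and are the downward closure of a finitely generated $A^+$-submodule; it is a $\mathbb{B}[A;A^+]$-module under union and elementwise multiplication (the free $\mathbb{B}[A;A^+]$-module on $(M,\le)$). A module is projective if every surjection onto it has a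 section. *)

From Stdlib Require Import List.
Import ListNotations.

Record F1Pair := {
  F1c :> Type;
  F1mul : F1c -> F1c -> F1c;
  F1one : F1c;
  F1zero : F1c;
  F1mulA : forall a b c, F1mul a (F1mul b c) = F1mul (F1mul a b) c;
  F1mulC : forall a b, F1mul a b = F1mul b a;
  F1mul1 : forall a, F1mul F1one a = a;
  F1mul0 : forall a, F1mul F1zero a = F1zero;
  F1plus : F1c -> Prop;
  F1plus0 : F1plus F1zero;
  F1plus1 : F1plus F1one;
  F1plusM : forall a b, F1plus a -> F1plus b -> F1plus (F1mul a b);
  F1plus_sharp : forall a b, F1plus a -> F1plus b -> F1mul a b = F1one -> a = F1one }.

Arguments F1mul {f} _ _.
Arguments F1one {f}.
Arguments F1zero {f}.
Arguments F1plus {f} _.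
Arguments F1mulA {f} _ _ _.
Arguments F1mulC {f} _ _.
Arguments F1mul1 {f} _.
Arguments F1mul0 {f} _.

Record AMod (A : F1Pair) := {
  Mc :> Type;
  Mpt : Mc;
  Mact : A -> Mc -> Mc;
  Mact1 : forall m, Mact F1one m = m;
  MactM : forall a b m, Mact (F1mul a b) m = Mact a (Mact b m);
  Mact0 : forall m, Mact F1zero m = Mpt;
  Mactpt : forall a, Mact a Mpt = Mpt }.

Arguments Mpt {A} _.
Arguments Mact {A} _ _ _.
Arguments Mact1 {A} _ _.
Arguments MactM {A} _ _ _ _.
Arguments Mact0 {A} _ _.
Arguments Mactpt {A} _ _.

Definition AMod_hom {A : F1Pair} {M N : AMod A} (f : M -> N) : Prop :=
  f (Mpt M) = Mpt N /\ forall a m, f (Mact M a m) = Mact N a (f m).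

Definition AMod_projective {A : F1Pair} (M : AMod A) : Prop :=
  forall (N : AMod A) (p : N -> M), AMod_hom p -> (forall m, exists n, p n = m) ->
  exists s : M -> N, AMod_hom s /\ forall m, p (s m) = m.

Definition submod {A : F1Pair} {M : AMod A} (S : M -> Prop) : Prop :=
  S (Mpt M) /\ forall f x, F1plus f -> S x -> S (Mact M f x).

Definition gen {A : F1Pair} {M : AMod A} (l : list M) (x : M) : Prop :=
  x = Mpt M \/ exists g f, In g l /\ F1plus f /\ x = Mact M f g.

Definition fgsub {A : F1Pair} {M : AMod A} (S : M -> Prop) : Prop :=
  exists l : list M, forall x, S x <-> gen l x.

Record POMod (A : F1Pair) := {
  pmod :> AMod A;
  ple : pmod -> pmod -> Prop;
  ple_refl : forall x, ple x x;
  ple_trans : forall x y z, ple x y -> ple y z -> ple x z;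
  ple_antisym : forall x y, ple x y -> ple y x -> x = y;
  ple_a : forall (v : pmod) (g f : A),
      (exists h, F1plus h /\ f = F1mul h g) -> ple (Mact _ f v) (Mact _ g v);
  ple_b : forall (v w : pmod) (f : A), ple v w -> ple (Mact _ f v) (Mact _ f w) }.

Arguments ple {A} _ _ _.
Arguments pmod {A} _.

Definition lower_set {A : F1Pair} {M : POMod A} (S : M -> Prop) : Prop :=
  forall x y, ple M x y -> S y -> S x.

Definition down {A : F1Pair} {M : POMod A} (S : M -> Prop) (x : M) : Prop :=
  exists y, S y /\ ple M x y.

Definition inBM {A : F1Pair} {M : POMod A} (S : M -> Prop) : Prop :=
  submod (M := M) S /\ lower_set S /\
  exists T : M -> Prop, fgsub (M := M) T /\ forall x, S x <-> down T x.

Definition lower_finite {A : F1Pair} (M : POMod A) : Prop :=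
  forall T : M -> Prop, fgsub (M := M) T -> fgsub (M := M) (down T).

Definition lower_saturated {A : F1Pair} (M : POMod A) : Prop :=
  forall D : M -> Prop, submod (M := M) D -> lower_set D ->
  forall f : A, lower_set (fun x : M => exists y, D y /\ x = Mact M f y).

Definition genA {A : F1Pair} (l : list A) (a : A) : Prop :=
  a = F1zero \/ exists g f, In g l /\ F1plus f /\ a = F1mul f g.

Record BA (A : F1Pair) := {
  baP :> A -> Prop;
  baFG : exists l : list A, forall a, baP a <-> genA l a }.

Arguments baP {A} _ _.
Arguments baFG {A} _.

Definition BAzero (A : F1Pair) : BA A :=
  {| baP := genA nil; baFG := ex_intro _ nil (fun a => iff_refl _) |}.

Definition BAone (A : F1Pair) : BA A :=
  {| baP := genA [F1one]; baFG := ex_intro _ [F1one] (fun a => iff_refl _) |}.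

Lemma genA_app {A : F1Pair} (l1 l2 : list A) a :
  genA (l1 ++ l2) a <-> genA l1 a \/ genA l2 a.
Proof. unfold genA; setoid_rewrite in_app_iff; firstorder. Qed.

Lemma BAjoin_fg {A : F1Pair} (I J : BA A) :
  exists l : list A, forall a, (I a \/ J a) <-> genA l a.
Proof.
  destruct (baFG I) as [l1 H1]; destruct (baFG J) as [l2 H2].
  exists (l1 ++ l2); intro a; rewrite genA_app, H1, H2; tauto.
Qed.

Definition BAjoin {A : F1Pair} (I J : BA A) : BA A :=
  {| baP := fun a => I a \/ J a; baFG := BAjoin_fg I J |}.

Lemma BAmul_fg {A : F1Pair} (I J : BA A) :
  exists l : list A, forall a,
    (exists i j, I i /\ J j /\ a = F1mul i j) <-> genA l a.
Proof.
  destruct (baFG I) as [l1 H1]; destruct (baFG J) as [l2 H2].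
  exists (flat_map (fun g => map (fun g' => F1mul g g') l2) l1).
  intro a; split.
  - intros [i [j [Hi [Hj ->]]]].
    apply H1 in Hi; apply H2 in Hj.
    destruct Hi as [-> | [g [f [Hg [Hf ->]]]]].
    + left; apply F1mul0.
    + destruct Hj as [-> | [g' [f' [Hg' [Hf' ->]]]]].
      * left; rewrite F1mulC; apply F1mul0.
      * right; exists (F1mul g g'), (F1mul f f'); repeat split.
        -- apply in_flat_map; exists g; split; [exact Hg|].
           apply in_map_iff; exists g'; split; [reflexivity | exact Hg'].
        -- apply F1plusM; assumption.
        -- rewrite <- !F1mulA; f_equal.
           rewrite !F1mulA, (F1mulC g f'); reflexivity.
  - intros [-> | [w [f [Hw [Hf ->]]]]].
    + exists F1zero, F1zero; repeat split.
      * apply H1; left; reflexivity.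
      * apply H2; left; reflexivity.
      * symmetry; apply F1mul0.
    + apply in_flat_map in Hw; destruct Hw as [g [Hg Hw]].
      apply in_map_iff in Hw; destruct Hw as [g' [<- Hg']].
      exists (F1mul f g), (F1mul F1one g'); repeat split.
      * apply H1; right; exists g, f; auto.
      * apply H2; right; exists g', F1one; repeat split; auto. apply F1plus1.
      * rewrite F1mul1, F1mulA; reflexivity.
Qed.

Definition BAmul {A : F1Pair} (I J : BA A) : BA A :=
  {| baP := fun a => exists i j, I i /\ J j /\ a = F1mul i j;
     baFG := BAmul_fg I J |}.

Record BStr (A : F1Pair) := {
  bs :> Type;
  bz : bs;
  bj : bs -> bs -> bs;
  bact : BA A -> bs -> bs }.

Arguments bz {A} _.
Arguments bj {A} _ _ _.
Arguments bact {A} _ _ _.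

Definition BModAx {A : F1Pair} (N : BStr A) : Prop :=
  (forall x y z, bj N x (bj N y z) = bj N (bj N x y) z) /\
  (forall x y, bj N x y = bj N y x) /\
  (forall x, bj N (bz N) x = x) /\
  (forall I J x, bact N (BAjoin I J) x = bj N (bact N I x) (bact N J x)) /\
  (forall I x y, bact N I (bj N x y) = bj N (bact N I x) (bact N I y)) /\
  (forall I J x, bact N (BAmul I J) x = bact N I (bact N J x)) /\
  (forall x, bact N (BAone A) x = x) /\
  (forall x, bact N (BAzero A) x = bz N) /\
  (forall I, bact N I (bz N) = bz N).

Record BMod (A : F1Pair) := {
  bstr :> BStr A;
  bax : BModAx bstr }.

Definition BMod_hom {A : F1Pair} {N P : BStr A} (f : N -> P) : Prop :=
  f (bz N) = bz P /\
  (forall x y, f (bj N x y) = bj P (f x) (f y)) /\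
  (forall I x, f (bact N I x) = bact P I (f x)).

Definition BMod_projective {A : F1Pair} (P : BStr A) : Prop :=
  forall (N : BMod A) (p : N -> P), BMod_hom p -> (forall y, exists x, p x = y) ->
  exists s : P -> N, BMod_hom s /\ forall y, p (s y) = y.

Section BM.
Variable A : F1Pair.
Variable M : POMod A.

Lemma inBM_ext (S S' : M -> Prop) :
  (forall x, S x <-> S' x) -> inBM S -> inBM S'.
Proof.
  intros E [[H0 H1] [H2 [T [HT HS]]]]; repeat split.
  - apply E; exact H0.
  - intros f x Hf Hx; apply E; apply H1; [exact Hf | apply E; exact Hx].
  - intros x y Hxy Hy; apply E; apply (H2 x y Hxy); apply E; exact Hy.
  - exists T; split; [exact HT|]. intro x; rewrite <- E; apply HS.
Qed.

Lemma inBM_down_gen (l : list M) : inBM (down (gen l)).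
Proof.
  repeat split.
  - exists (Mpt M); split; [left; reflexivity | apply ple_refl].
  - intros f x Hf [y [Hy Hxy]]; exists (Mact M f y); split.
    + destruct Hy as [-> | [g [f' [Hg [Hf' ->]]]]].
      * left; apply Mactpt.
      * right; exists g, (F1mul f f'); repeat split; auto.
        -- apply F1plusM; assumption.
        -- symmetry; apply MactM.
    + apply ple_b; exact Hxy.
  - intros x y Hxy [z [Hz Hyz]]; exists z; split; [exact Hz|].
    eapply ple_trans; eassumption.
  - exists (gen l); split; [exists l; intro; reflexivity | intro; reflexivity].
Qed.

Lemma inBM_repr (S : M -> Prop) :
  inBM S -> exists l, forall x, S x <-> down (gen l) x.
Proof.
  intros [_ [_ [T [[l Hl] HS]]]]; exists l; intro x; rewrite HS.
  unfold down; split; intros [y [Hy Hle]]; exists y; split; auto; apply Hl; auto.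
Qed.

Lemma gen_app (l1 l2 : list M) x : gen (l1 ++ l2) x <-> gen l1 x \/ gen l2 x.
Proof. unfold gen; setoid_rewrite in_app_iff; firstorder. Qed.

Definition BMcar := { S : M -> Prop | inBM S }.

Definition BMzero : BMcar := exist _ (down (gen nil)) (inBM_down_gen nil).

Lemma BMjoin_in (S T : BMcar) : inBM (fun x => proj1_sig S x \/ proj1_sig T x).
Proof.
  destruct S as [S HS], T as [T HT]; simpl.
  destruct (inBM_repr _ HS) as [l1 E1]; destruct (inBM_repr _ HT) as [l2 E2].
  apply (@inBM_ext (down (gen (l1 ++ l2)))); [|apply inBM_down_gen].
  intro x; rewrite E1, E2; unfold down; setoid_rewrite gen_app; firstorder.
Qed.

Definition BMjoin (S T : BMcar) : BMcar := exist _ _ (BMjoin_in S T).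

Lemma BMact_in (I : BA A) (S : BMcar) :
  inBM (down (fun x => exists i y, I i /\ proj1_sig S y /\ x = Mact M i y)).
Proof.
  destruct S as [S HS]; simpl.
  destruct (inBM_repr _ HS) as [l2 E2]; destruct (baFG I) as [l1 H1].
  apply (@inBM_ext (down (gen (flat_map (fun g => map (fun m => Mact M g m) l2) l1))));
    [|apply inBM_down_gen].
  intro x; split.
  - intros [z [Hz Hxz]]; exists z; split; [|exact Hxz].
    destruct Hz as [-> | [w [f [Hw [Hf ->]]]]].
    + exists F1zero, (Mpt M); repeat split.
      * apply H1; left; reflexivity.
      * apply E2; exists (Mpt M); split; [left; reflexivity | apply ple_refl].
      * symmetry; apply Mact0.
    + apply in_flat_map in Hw; destruct Hw as [g [Hg Hw]].
      apply in_map_iff in Hw; destruct Hw as [g' [<- Hg']].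
      exists (F1mul f g), g'; repeat split.
      * apply H1; right; exists g, f; auto.
      * apply E2; exists g'; split; [|apply ple_refl].
        right; exists g', F1one; repeat split; auto.
        -- apply F1plus1.
        -- symmetry; apply Mact1.
      * symmetry; apply MactM.
  - intros [p [[i [y [Hi [Hy ->]]]] Hxp]].
    apply E2 in Hy; destruct Hy as [m [Hm Hym]].
    exists (Mact M i m); split.
    + apply H1 in Hi; destruct Hi as [-> | [g [f [Hg [Hf ->]]]]].
      * left; apply Mact0.
      * destruct Hm as [-> | [g' [f' [Hg' [Hf' ->]]]]].
        -- left; apply Mactpt.
        -- right; exists (Mact M g g'), (F1mul f f'); repeat split.
           ++ apply in_flat_map; exists g; split; [exact Hg|].
              apply in_map_iff; exists g'; split; [reflexivity | exact Hg'].
           ++ apply F1plusM; assumption.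
           ++ rewrite <- !MactM; f_equal.
              rewrite <- !F1mulA, (F1mulC g f'); reflexivity.
    + eapply ple_trans; [exact Hxp | apply ple_b; exact Hym].
Qed.

Definition BMact (I : BA A) (S : BMcar) : BMcar := exist _ _ (BMact_in I S).

Definition BM : BStr A :=
  {| bs := BMcar; bz := BMzero; bj := BMjoin; bact := BMact |}.

End BM.

Arguments BM {A} M.

(* Forward direction.  Taking lower hulls is a surjection onto B(M,<=) from the
   free B[A;A^+]-module of finitely generated A^+-submodules of M.  A section of
   it preserves joins, so it is monotone, and it sends the principal lower set of
   x to a set containing x (an element y of it satisfies x <= y <= f x <= x);
   hence it is the identity on underlying sets.  So lower hulls of finitely
   generated submodules are finitely generated, and x <= f y with y in D is
   read off from the section applied to f . (lower hull of y), whose elements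
   are of the form i w with i in A^+ f and w <= y.

   Backward direction.  Pulling a surjection N -> B(M,<=) back along the
   principal lower set map x |-> down x gives a surjection of A-modules onto M,
   so projectivity of M lifts down x equivariantly to some t x in N.  Every S in
   B(M,<=) is generated by a finite list by lower finiteness, and sending S to
   the join of t over such a list is well defined because N is idempotent and
   f t x <= t x for f in A^+.  It preserves joins; it commutes with the action
   because, by lower saturation, I S is already a lower set. *)

From Stdlib Require Import List PropExtensionality FunctionalExtensionality ProofIrrelevance IndefiniteDescription.
Import ListNotations.

Lemma sig_ext {T : Type} {P : T -> Prop} (x y : {t | P t}) :
  proj1_sig x = proj1_sig y -> x = y.
Proof.
  destruct x as [x Hx], y as [y Hy]; simpl; intros ->; f_equal; apply proof_irrelevance.
Qed.

Lemma pred_ext {T : Type} (P Q : T -> Prop) : (forall x, P x <-> Q x) -> P = Q.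
Proof.
  intro H; apply functional_extensionality; intro x; apply propositional_extensionality, H.
Qed.

Lemma F1mul1r {A : F1Pair} (a : A) : F1mul a F1one = a.
Proof. rewrite F1mulC; apply F1mul1. Qed.

Section Ideals.
Context {A : F1Pair}.

Lemma BA_ext (I J : BA A) : (forall a, I a <-> J a) -> I = J.
Proof.
  destruct I as [I HI], J as [J HJ]; simpl; intro H.
  apply pred_ext in H; subst J; f_equal; apply proof_irrelevance.
Qed.

Definition BAgen (k : list A) : BA A :=
  {| baP := genA k; baFG := ex_intro _ k (fun _ => iff_refl _) |}.

Definition BAprin (a : A) : BA A := BAgen [a].

Lemma BA_gens (I : BA A) : exists k, I = BAgen k.
Proof. destruct (baFG I) as [k Hk]; exists k; apply BA_ext, Hk. Qed.

Lemma genA_single (a c : A) :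
  genA [a] c <-> c = F1zero \/ exists f, F1plus f /\ c = F1mul f a.
Proof.
  split.
  - intros [-> | [g [f [[<- | []] [Hf ->]]]]]; [left; reflexivity | right; exists f; auto].
  - intros [-> | [f [Hf ->]]]; [left; reflexivity | right; exists a, f; simpl; auto].
Qed.

Lemma BAgen_cons (g : A) (k : list A) : BAgen (g :: k) = BAjoin (BAprin g) (BAgen k).
Proof. apply BA_ext; intro a; exact (genA_app [g] k a). Qed.

Lemma BAprin_zero : BAprin F1zero = BAzero A.
Proof.
  apply BA_ext; intro c; simpl; rewrite genA_single; split.
  - intros [-> | [f [_ ->]]]; left; [reflexivity | rewrite F1mulC; apply F1mul0].
  - intros [-> | [g [f [[] _]]]]; left; reflexivity.
Qed.

Lemma BAprin_mul (a b : A) : BAprin (F1mul a b) = BAmul (BAprin a) (BAprin b).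
Proof.
  apply BA_ext; intro c; simpl; rewrite genA_single; split.
  - intros [-> | [f [Hf ->]]].
    + exists F1zero, F1zero; rewrite !genA_single, F1mul0; auto.
    + exists (F1mul f a), b; rewrite !genA_single; repeat split.
      * right; exists f; auto.
      * right; exists F1one; split; [apply F1plus1 | symmetry; apply F1mul1].
      * apply F1mulA.
  - intros [i [j [Hi [Hj ->]]]]; rewrite genA_single in Hi, Hj.
    destruct Hi as [-> | [f [Hf ->]]]; [left; apply F1mul0|].
    destruct Hj as [-> | [f' [Hf' ->]]]; [left; rewrite F1mulC; apply F1mul0|].
    right; exists (F1mul f f'); split; [apply F1plusM; assumption|].
    rewrite <- !F1mulA; f_equal; rewrite !F1mulA, (F1mulC a f'); reflexivity.
Qed.

End Ideals.

Section Generators.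
Context {A : F1Pair} (M : POMod A).
Implicit Types (l : list M) (x y : M).

Lemma gen_pt l : gen l (Mpt M).
Proof. left; reflexivity. Qed.

Lemma gen_in l g : In g l -> gen l g.
Proof.
  intro Hg; right; exists g, F1one; repeat split; [exact Hg | apply F1plus1 | symmetry; apply Mact1].
Qed.

Lemma gen_act l f x : F1plus f -> gen l x -> gen l (Mact M f x).
Proof.
  intros Hf [-> | [g [f' [Hg [Hf' ->]]]]]; [left; apply Mactpt|].
  right; exists g, (F1mul f f'); repeat split; [exact Hg | apply F1plusM; assumption |].
  symmetry; apply MactM.
Qed.

Lemma gen_nil x : gen (M := M) nil x <-> x = Mpt M.
Proof. split; [intros [-> | [g [f [[] _]]]]; reflexivity | intros ->; apply gen_pt]. Qed.

Lemma gen_single g x : gen [g] x <-> x = Mpt M \/ exists f, F1plus f /\ x = Mact M f g.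
Proof.
  split.
  - intros [-> | [h [f [[<- | []] [Hf ->]]]]]; [left; reflexivity | right; exists f; auto].
  - intros [-> | [f [Hf ->]]]; [apply gen_pt | apply gen_act, gen_in; simpl; auto].
Qed.

Lemma fgsub_submod (T : M -> Prop) : fgsub (M := pmod M) T -> submod (M := pmod M) T.
Proof.
  intros [l Hl]; split; [apply Hl, gen_pt|].
  intros f x Hf Hx; apply Hl, gen_act, Hl; assumption.
Qed.

Definition prodgens (k : list A) l : list M := flat_map (fun g => map (Mact M g) l) k.

Definition actset (I : A -> Prop) (T : M -> Prop) x : Prop :=
  exists i y, I i /\ T y /\ x = Mact M i y.

Lemma actset_gen (I : A -> Prop) k (T : M -> Prop) l :
  (forall a, I a <-> genA k a) -> (forall x, T x <-> gen l x) ->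
  forall x, actset I T x <-> gen (prodgens k l) x.
Proof.
  intros HI HT x; split.
  - intros [i [y [Hi [Hy ->]]]]; apply HI in Hi; apply HT in Hy.
    destruct Hi as [-> | [g [f [Hg [Hf ->]]]]]; [left; apply Mact0|].
    destruct Hy as [-> | [h [f' [Hh [Hf' ->]]]]]; [left; apply Mactpt|].
    right; exists (Mact M g h), (F1mul f f'); repeat split.
    + apply in_flat_map; exists g; split; [exact Hg | apply in_map; exact Hh].
    + apply F1plusM; assumption.
    + rewrite <- !MactM; f_equal; rewrite <- !F1mulA, (F1mulC g f'); reflexivity.
  - intros [-> | [w [f [Hw [Hf ->]]]]].
    + exists F1zero, (Mpt M); repeat split; [apply HI; left; reflexivity | apply HT, gen_pt |].
      symmetry; apply Mact0.
    + apply in_flat_map in Hw; destruct Hw as [g [Hg Hw]].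
      apply in_map_iff in Hw; destruct Hw as [h [<- Hh]].
      exists (F1mul f g), h; repeat split.
      * apply HI; right; exists g, f; auto.
      * apply HT, gen_in, Hh.
      * symmetry; apply MactM.
Qed.

End Generators.

Section LowerSets.
Context {A : F1Pair} (M : POMod A).
Implicit Types (l : list M) (x y : M).

Lemma ple_ptl x : ple M (Mpt M) x.
Proof.
  pose proof (ple_a A M x F1one F1zero) as H; rewrite Mact0, Mact1 in H.
  apply H; exists F1zero; split; [apply F1plus0 | symmetry; apply F1mul0].
Qed.

Lemma ple_actl f x : F1plus f -> ple M (Mact M f x) x.
Proof.
  intro Hf; pose proof (ple_a A M x F1one f) as H; rewrite Mact1 in H.
  apply H; exists f; split; [exact Hf | symmetry; apply F1mul1r].
Qed.

Lemma ple_pt x : ple M x (Mpt M) -> x = Mpt M.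
Proof. intro H; apply ple_antisym; [exact H | apply ple_ptl]. Qed.

Lemma down_lower (S : M -> Prop) x : lower_set S -> down S x <-> S x.
Proof.
  intro HS; split; [intros [y [Hy Hxy]]; exact (HS x y Hxy Hy)|].
  intro Hx; exists x; split; [exact Hx | apply ple_refl].
Qed.

Lemma down_ext (S T : M -> Prop) : (forall x, S x <-> T x) -> forall x, down S x <-> down T x.
Proof. intros H x; unfold down; setoid_rewrite H; reflexivity. Qed.

Lemma down_gen_cons g l x : down (gen (g :: l)) x <-> down (gen [g]) x \/ down (gen l) x.
Proof. unfold down; setoid_rewrite (gen_app A M [g] l); firstorder. Qed.

Lemma down_gen_sub (D : M -> Prop) l :
  submod (M := pmod M) D -> lower_set D -> (forall g, In g l -> D g) ->
  forall x, down (gen l) x -> D x.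
Proof.
  intros [HD0 HDact] HDl Hl x [y [Hy Hxy]]; apply (HDl x y Hxy).
  destruct Hy as [-> | [g [f [Hg [Hf ->]]]]]; [exact HD0 | apply HDact, Hl; assumption].
Qed.

Lemma inBM_down_fg (T : M -> Prop) : fgsub (M := pmod M) T -> inBM (down T).
Proof.
  intros [l Hl]; apply (inBM_ext A M (down (gen l))); [|apply inBM_down_gen].
  intro x; apply down_ext; intro y; symmetry; apply Hl.
Qed.

Lemma BM_ext (S T : BMcar A M) : (forall x, proj1_sig S x <-> proj1_sig T x) -> S = T.
Proof. intro H; apply sig_ext, pred_ext, H. Qed.

Lemma BM_lower (S : BMcar A M) x : down (proj1_sig S) x <-> proj1_sig S x.
Proof. apply down_lower, (proj2_sig S). Qed.

Lemma BMjoin_sub (S T : BMcar A M) :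
  (forall x, proj1_sig S x -> proj1_sig T x) -> BMjoin A M S T = T.
Proof. intro H; apply BM_ext; intro x; simpl; split; [intros [Hx | Hx]; auto | auto]. Qed.

Definition BMprin x : BMcar A M := exist _ (down (gen [x])) (inBM_down_gen A M [x]).

Lemma BMprin_pt : BMprin (Mpt M) = BMzero A M.
Proof.
  apply BM_ext; apply down_ext; intro y; rewrite gen_single, gen_nil; split; [|auto].
  intros [-> | [f [_ ->]]]; [reflexivity | apply Mactpt].
Qed.

Lemma BMact_gen (I : BA A) k (S : BMcar A M) l :
  (forall a, I a <-> genA k a) -> (forall x, proj1_sig S x <-> down (gen l) x) ->
  forall x, proj1_sig (BMact A M I S) x <-> down (gen (prodgens M k l)) x.
Proof.
  intros HI HS x; pose proof (actset_gen M I k (gen l) l HI (fun _ => iff_refl _)) as Hprod.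
  simpl; split.
  - intros [z [[i [y [Hi [Hy ->]]]] Hxz]]; apply HS in Hy; destruct Hy as [m [Hm Hym]].
    exists (Mact M i m); split; [apply Hprod; exists i, m; auto|].
    eapply ple_trans; [exact Hxz | apply ple_b, Hym].
  - intros [z [Hz Hxz]]; exists z; split; [|exact Hxz].
    apply Hprod in Hz; destruct Hz as [i [y [Hi [Hy ->]]]].
    exists i, y; repeat split; [exact Hi | apply HS; exists y; split; [exact Hy | apply ple_refl]].
Qed.

Lemma BMact_prin (a : A) x : BMact A M (BAprin a) (BMprin x) = BMprin (Mact M a x).
Proof.
  apply BM_ext; intro z.
  rewrite (BMact_gen (BAprin a) [a] (BMprin x) [x] (fun _ => iff_refl _) (fun _ => iff_refl _)).
  reflexivity.
Qed.

Lemma BMact_saturated (I : BA A) (S : BMcar A M) x :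
  lower_saturated M -> proj1_sig (BMact A M I S) x <-> actset M I (proj1_sig S) x.
Proof.
  intro Hsat; split.
  - intros [z [[i [y [Hi [Hy ->]]]] Hxz]].
    destruct (proj2_sig S) as [HS [HSl _]].
    destruct (Hsat _ HS HSl i x (Mact M i y) Hxz) as [y' [Hy' ->]]; [exists y; auto|].
    exists i, y'; auto.
  - intro Hx; exists x; split; [exact Hx | apply ple_refl].
Qed.

End LowerSets.

Arguments BMprin {A} M x.

Section BModAxioms.
Context {A : F1Pair} (N : BMod A).
Implicit Types (x y z : N) (I J : BA A).

Lemma bj_assoc x y z : bj N x (bj N y z) = bj N (bj N x y) z.
Proof. destruct (bax _ N) as (H & _); apply H. Qed.
Lemma bj_comm x y : bj N x y = bj N y x.
Proof. destruct (bax _ N) as (_ & H & _); apply H. Qed.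
Lemma bj_bz x : bj N (bz N) x = x.
Proof. destruct (bax _ N) as (_ & _ & H & _); apply H. Qed.
Lemma bact_BAjoin I J x : bact N (BAjoin I J) x = bj N (bact N I x) (bact N J x).
Proof. destruct (bax _ N) as (_ & _ & _ & H & _); apply H. Qed.
Lemma bact_bj I x y : bact N I (bj N x y) = bj N (bact N I x) (bact N I y).
Proof. destruct (bax _ N) as (_ & _ & _ & _ & H & _); apply H. Qed.
Lemma bact_BAmul I J x : bact N (BAmul I J) x = bact N I (bact N J x).
Proof. destruct (bax _ N) as (_ & _ & _ & _ & _ & H & _); apply H. Qed.
Lemma bact_BAone x : bact N (BAone A) x = x.
Proof. destruct (bax _ N) as (_ & _ & _ & _ & _ & _ & H & _); apply H. Qed.
Lemma bact_BAzero x : bact N (BAzero A) x = bz N.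
Proof. destruct (bax _ N) as (_ & _ & _ & _ & _ & _ & _ & H & _); apply H. Qed.
Lemma bact_bz I : bact N I (bz N) = bz N.
Proof. destruct (bax _ N) as (_ & _ & _ & _ & _ & _ & _ & _ & H); apply H. Qed.

Definition leN x y : Prop := bj N x y = y.

Lemma leN_bz x : leN (bz N) x.
Proof. apply bj_bz. Qed.

Lemma leN_trans x y z : leN x y -> leN y z -> leN x z.
Proof. unfold leN; intros H1 H2; rewrite <- H2, bj_assoc, H1; reflexivity. Qed.

Lemma leN_join x y z : leN x z -> leN y z -> leN (bj N x y) z.
Proof. unfold leN; intros H1 H2; rewrite <- bj_assoc, H2, H1; reflexivity. Qed.

Lemma leN_antisym x y : leN x y -> leN y x -> x = y.
Proof. unfold leN; intros H1 H2; rewrite <- H1, <- H2 at 1; apply bj_comm. Qed.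

Lemma bj_idem x : bj N x x = x.
Proof.
  rewrite <- (bact_BAone x), <- bact_BAjoin.
  replace (BAjoin (BAone A) (BAone A)) with (BAone A) by (apply BA_ext; intro; simpl; tauto).
  reflexivity.
Qed.

Lemma leN_l x y : leN x (bj N x y).
Proof. unfold leN; rewrite bj_assoc, bj_idem; reflexivity. Qed.

(* [BAprin f] is contained in [BAone], hence absorbed by it in a join. *)
Lemma leN_act (f : A) x : F1plus f -> leN (bact N (BAprin f) x) x.
Proof.
  intro Hf; unfold leN.
  transitivity (bact N (BAjoin (BAprin f) (BAone A)) x); [rewrite bact_BAjoin, bact_BAone; reflexivity|].
  replace (BAjoin (BAprin f) (BAone A)) with (BAone A); [apply bact_BAone|].
  apply BA_ext; intro c; simpl; split; [tauto|].
  intros [Hc | Hc]; [|exact Hc]; apply genA_single in Hc; apply genA_single.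
  destruct Hc as [-> | [f' [Hf' ->]]]; [left; reflexivity|].
  right; exists (F1mul f' f); split; [apply F1plusM; assumption | symmetry; apply F1mul1r].
Qed.

Definition BMod_AMod : AMod A.
Proof.
  refine {| Mc := N; Mpt := bz N; Mact := fun a => bact N (BAprin a) |}.
  - intro x; apply bact_BAone.
  - intros a b x; rewrite BAprin_mul; apply bact_BAmul.
  - intro x; rewrite BAprin_zero; apply bact_BAzero.
  - intro a; apply bact_bz.
Defined.

End BModAxioms.

Section Forward.
Context {A : F1Pair} (M : POMod A).

Definition FMc := { T : M -> Prop | fgsub (M := pmod M) T }.

Lemma FM_ext (S T : FMc) : (forall x, proj1_sig S x <-> proj1_sig T x) -> S = T.
Proof. intro H; apply sig_ext, pred_ext, H. Qed.

Lemma FM_pt (T : FMc) : proj1_sig T (Mpt M).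
Proof. apply (fgsub_submod M _ (proj2_sig T)). Qed.

Lemma FM_act (T : FMc) f x : F1plus f -> proj1_sig T x -> proj1_sig T (Mact M f x).
Proof. apply (fgsub_submod M _ (proj2_sig T)). Qed.

Definition FMzero : FMc := exist _ (gen nil) (ex_intro _ nil (fun _ => iff_refl _)).

Lemma FMjoin_fg (S T : FMc) : fgsub (M := pmod M) (fun x => proj1_sig S x \/ proj1_sig T x).
Proof.
  destruct S as [S [l1 H1]], T as [T [l2 H2]]; exists (l1 ++ l2); intro x; simpl.
  rewrite gen_app, H1, H2; reflexivity.
Qed.

Definition FMjoin (S T : FMc) : FMc := exist _ _ (FMjoin_fg S T).

Lemma FMact_fg (I : BA A) (T : FMc) : fgsub (M := pmod M) (actset M I (proj1_sig T)).
Proof.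
  destruct (BA_gens I) as [k ->]; destruct T as [T [l Hl]]; simpl.
  exists (prodgens M k l); exact (actset_gen M _ k T l (fun _ => iff_refl _) Hl).
Qed.

Definition FMact (I : BA A) (T : FMc) : FMc := exist _ _ (FMact_fg I T).

Definition FMstr : BStr A := {| bs := FMc; bz := FMzero; bj := FMjoin; bact := FMact |}.

Lemma FM_axioms : BModAx FMstr.
Proof.
  unfold BModAx; simpl; repeat split.
  - intros; apply FM_ext; intro; simpl; tauto.
  - intros; apply FM_ext; intro; simpl; tauto.
  - intro T; apply FM_ext; intro x; simpl; rewrite gen_nil; split; [|tauto].
    intros [-> | Hx]; [apply FM_pt | exact Hx].
  - intros; apply FM_ext; intro; simpl; unfold actset; firstorder.
  - intros; apply FM_ext; intro; simpl; unfold actset; firstorder.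
  - intros I J T; apply FM_ext; intro x; simpl; unfold actset; split.
    + intros [c [y [[i [j [Hi [Hj ->]]]] [Hy ->]]]].
      exists i, (Mact M j y); repeat split; [exact Hi | exists j, y; auto | apply MactM].
    + intros [i [z [Hi [[j [y [Hj [Hy ->]]]] ->]]]].
      exists (F1mul i j), y; repeat split; [exists i, j; auto | exact Hy | symmetry; apply MactM].
  - intro T; apply FM_ext; intro x; simpl; unfold actset; split.
    + intros [i [y [Hi [Hy ->]]]]; apply genA_single in Hi.
      destruct Hi as [-> | [f [Hf ->]]]; [rewrite Mact0; apply FM_pt|].
      rewrite F1mul1r; apply FM_act; assumption.
    + intro Hx; exists F1one, x; repeat split; [| exact Hx | symmetry; apply Mact1].
      apply genA_single; right; exists F1one; split; [apply F1plus1 | symmetry; apply F1mul1].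
  - intro T; apply FM_ext; intro x; simpl; unfold actset; rewrite gen_nil; split.
    + intros [i [y [[-> | [g [f [[] _]]]] [_ ->]]]]; apply Mact0.
    + intros ->; exists F1zero, (Mpt M); repeat split; [left; reflexivity | apply FM_pt |].
      symmetry; apply Mact0.
  - intro I; apply FM_ext; intro x; simpl; unfold actset; rewrite gen_nil; split.
    + intros [i [y [_ [Hy ->]]]]; apply gen_nil in Hy; subst y; apply Mactpt.
    + intros ->; exists F1zero, (Mpt M); repeat split; [| apply gen_pt | symmetry; apply Mact0].
      destruct (BA_gens I) as [k ->]; left; reflexivity.
Qed.

Definition FM : BMod A := {| bstr := FMstr; bax := FM_axioms |}.

Definition hull (T : FMc) : BMcar A M := exist _ _ (inBM_down_fg M _ (proj2_sig T)).

Lemma hull_hom : BMod_hom (N := FMstr) (P := BM M) hull.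
Proof.
  split; [|split].
  - apply BM_ext; intro; reflexivity.
  - intros S T; apply BM_ext; intro x; simpl; unfold down; firstorder.
  - intros I T; apply BM_ext; intro x; simpl; unfold actset; split.
    + intros [z [[i [y [Hi [Hy ->]]]] Hxz]].
      exists (Mact M i y); split; [|exact Hxz].
      exists i, y; repeat split; [exact Hi | exists y; split; [exact Hy | apply ple_refl]].
    + intros [z [[i [y [Hi [[y' [Hy' Hyy']] ->]]]] Hxz]].
      exists (Mact M i y'); split; [exists i, y'; auto|].
      eapply ple_trans; [exact Hxz | apply ple_b, Hyy'].
Qed.

Lemma hull_surj (S : BMcar A M) : exists T, hull T = S.
Proof.
  destruct (inBM_repr A M _ (proj2_sig S)) as [l Hl].
  exists (exist _ (gen l) (ex_intro _ l (fun _ => iff_refl _)) : FMc).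
  apply BM_ext; intro x; symmetry; apply Hl.
Qed.

Section SectionOfHull.
Variable s : BM M -> FM.
Hypothesis s_hom : BMod_hom s.
Hypothesis s_sec : forall S, hull (s S) = S.

Lemma section_sub S x : proj1_sig (s S) x -> proj1_sig S x.
Proof. intro Hx; rewrite <- (s_sec S); exists x; split; [exact Hx | apply ple_refl]. Qed.

Lemma section_mono S T :
  (forall x, proj1_sig S x -> proj1_sig T x) -> forall x, proj1_sig (s S) x -> proj1_sig (s T) x.
Proof.
  intros HST x Hx; rewrite <- (BMjoin_sub M S T HST).
  change (s (BMjoin A M S T)) with (s (bj (BM M) S T)).
  rewrite (proj1 (proj2 s_hom)); left; exact Hx.
Qed.

Lemma section_prin x : proj1_sig (s (BMprin M x)) x.
Proof.
  assert (Hx : proj1_sig (hull (s (BMprin M x))) x).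
  { rewrite s_sec; exists x; split; [apply gen_in; left; reflexivity | apply ple_refl]. }
  destruct Hx as [y [Hy Hxy]].
  destruct (section_sub _ _ Hy) as [w [Hw Hyw]]; apply gen_single in Hw.
  destruct Hw as [-> | [f [Hf ->]]].
  - rewrite (ple_pt M x) by (eapply ple_trans; eassumption); apply FM_pt.
  - assert (Hyx : y = x).
    { apply ple_antisym; [eapply ple_trans; [exact Hyw | apply ple_actl, Hf] | exact Hxy]. }
    rewrite Hyx in Hy; exact Hy.
Qed.

Lemma section_id S x : proj1_sig (s S) x <-> proj1_sig S x.
Proof.
  split; [apply section_sub|].
  intro Hx; apply (section_mono (BMprin M x)); [|apply section_prin].
  destruct (proj2_sig S) as [HS [HSl _]].
  apply (down_gen_sub M _ [x] HS HSl); intros g [<- | []]; exact Hx.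
Qed.

Lemma lower_finite_of_section : lower_finite M.
Proof.
  intros T HT; destruct (proj2_sig (s (exist _ (down T) (inBM_down_fg M T HT)))) as [l Hl].
  exists l; intro x; rewrite <- Hl, section_id; reflexivity.
Qed.

Lemma lower_saturated_of_section : lower_saturated M.
Proof.
  intros D HD HDl f x z Hxz [y [Hy ->]].
  assert (Hx : proj1_sig (s (BMact A M (BAprin f) (BMprin M y))) x).
  { rewrite BMact_prin, section_id; exists (Mact M f y); split; [apply gen_in; left; auto | exact Hxz]. }
  change (BMact A M (BAprin f) (BMprin M y)) with (bact (BM M) (BAprin f) (BMprin M y)) in Hx.
  rewrite (proj2 (proj2 s_hom)) in Hx; destruct Hx as [i [w [Hi [Hw ->]]]].
  rewrite section_id in Hw.
  assert (HwD : D w) by (apply (down_gen_sub M D [y] HD HDl); [intros g [<- | []]; exact Hy | exact Hw]).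
  apply genA_single in Hi; destruct Hi as [-> | [h [Hh ->]]].
  - exists (Mpt M); split; [apply HD | rewrite Mact0, Mactpt; reflexivity].
  - exists (Mact M h w); split; [apply HD; assumption | rewrite F1mulC, MactM; reflexivity].
Qed.

End SectionOfHull.

Lemma lower_finite_saturated_of_projective :
  BMod_projective (BM M) -> lower_finite M /\ lower_saturated M.
Proof.
  intro HP; destruct (HP FM hull hull_hom hull_surj) as [s [Hs Hsec]].
  split; [exact (lower_finite_of_section s Hs Hsec) | exact (lower_saturated_of_section s Hs Hsec)].
Qed.

End Forward.

Section Pullback.
Context {A : F1Pair} (M : POMod A) (N : BMod A) (p : N -> BM M) (Hp : BMod_hom p).

Definition Pbc := { q : N * M | p (fst q) = BMprin M (snd q) }.

Lemma Pb_pt_ok : p (bz N) = BMprin M (Mpt M).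
Proof. rewrite BMprin_pt; exact (proj1 Hp). Qed.

Lemma Pb_act_ok (a : A) (q : Pbc) :
  p (bact N (BAprin a) (fst (proj1_sig q))) = BMprin M (Mact M a (snd (proj1_sig q))).
Proof. rewrite (proj2 (proj2 Hp)), (proj2_sig q); apply BMact_prin. Qed.

Definition Pb_act (a : A) (q : Pbc) : Pbc :=
  exist _ (bact N (BAprin a) (fst (proj1_sig q)), Mact M a (snd (proj1_sig q))) (Pb_act_ok a q).

Definition Pb : AMod A.
Proof.
  refine {| Mc := Pbc; Mpt := exist _ (bz N, Mpt M) Pb_pt_ok; Mact := Pb_act |}.
  - intros [[n x] H]; apply sig_ext; simpl; rewrite Mact1; f_equal.
    exact (Mact1 (BMod_AMod N) n).
  - intros a b [[n x] H]; apply sig_ext; simpl; rewrite MactM; f_equal.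
    exact (MactM (BMod_AMod N) a b n).
  - intros [[n x] H]; apply sig_ext; simpl; rewrite Mact0; f_equal.
    exact (Mact0 (BMod_AMod N) n).
  - intro a; apply sig_ext; simpl; rewrite Mactpt; f_equal.
    exact (Mactpt (BMod_AMod N) a).
Defined.

Lemma lift_of_projective :
  AMod_projective (pmod M) -> (forall y, exists x, p x = y) ->
  exists t : M -> N, AMod_hom (M := pmod M) (N := BMod_AMod N) t /\
    forall x, p (t x) = BMprin M x.
Proof.
  intros HPM Hsurj.
  destruct (HPM Pb (fun q : Pb => snd (proj1_sig q))) as [sg [[Hs0 Hs1] Hs]].
  - split; reflexivity.
  - intro m; destruct (Hsurj (BMprin M m)) as [n Hn]; exists (exist _ (n, m) Hn : Pb); reflexivity.
  - exists (fun x => fst (proj1_sig (sg x))); repeat split.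
    + simpl; rewrite Hs0; reflexivity.
    + intros a x; simpl; rewrite Hs1; reflexivity.
    + intro x; rewrite (proj2_sig (sg x)), Hs; reflexivity.
Qed.

End Pullback.

Section Backward.
Context {A : F1Pair} (M : POMod A) (N : BMod A) (p : N -> BM M) (Hp : BMod_hom p)
  (t : M -> N) (Ht : AMod_hom (M := pmod M) (N := BMod_AMod N) t)
  (Hpt : forall x, p (t x) = BMprin M x)
  (Hfin : lower_finite M) (Hsat : lower_saturated M).

Definition tjoin (l : list M) : N := fold_right (fun g acc => bj N (t g) acc) (bz N) l.

Lemma tjoin_app l1 l2 : tjoin (l1 ++ l2) = bj N (tjoin l1) (tjoin l2).
Proof.
  induction l1 as [|g l1 IH]; simpl; [symmetry; apply bj_bz | rewrite IH; apply bj_assoc].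
Qed.

Lemma tjoin_in l g : In g l -> leN N (t g) (tjoin l).
Proof.
  induction l as [|h l IH]; simpl; [tauto|]; intros [<- | Hg]; [apply leN_l|].
  eapply leN_trans; [apply IH, Hg|]; rewrite bj_comm; apply leN_l.
Qed.

Lemma tjoin_le l l' : (forall g, In g l -> gen l' g) -> leN N (tjoin l) (tjoin l').
Proof.
  induction l as [|g l IH]; intro H; simpl; [apply leN_bz|].
  apply leN_join; [|apply IH; intros h Hh; apply H; right; exact Hh].
  destruct (H g (or_introl eq_refl)) as [-> | [h [f [Hh [Hf ->]]]]].
  - rewrite (proj1 Ht); apply leN_bz.
  - rewrite (proj2 Ht); eapply leN_trans; [apply leN_act, Hf | apply tjoin_in, Hh].
Qed.

Lemma tjoin_gen l l' : (forall x, gen l x <-> gen l' x) -> tjoin l = tjoin l'.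
Proof.
  intro H; apply leN_antisym; apply tjoin_le; intros g Hg; apply H, gen_in, Hg.
Qed.

Lemma bact_prin_tjoin a l : bact N (BAprin a) (tjoin l) = tjoin (map (Mact M a) l).
Proof.
  induction l as [|g l IH]; simpl; [apply bact_bz|].
  rewrite bact_bj, IH; f_equal; symmetry; apply (proj2 Ht).
Qed.

Lemma bact_tjoin k l : bact N (BAgen k) (tjoin l) = tjoin (prodgens M k l).
Proof.
  induction k as [|a k IH]; simpl; [apply bact_BAzero|].
  rewrite BAgen_cons, bact_BAjoin, IH, bact_prin_tjoin, tjoin_app; reflexivity.
Qed.

Lemma p_tjoin l x : proj1_sig (p (tjoin l)) x <-> down (gen l) x.
Proof.
  revert x; induction l as [|g l IH]; intro x; simpl.
  - rewrite (proj1 Hp); reflexivity.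
  - rewrite (proj1 (proj2 Hp)), Hpt; simpl; rewrite IH; symmetry; apply down_gen_cons.
Qed.

Lemma BM_gens (S : BMcar A M) : exists l, forall x, proj1_sig S x <-> gen l x.
Proof.
  destruct (proj2_sig S) as (_ & _ & T & HT & HS); destruct (Hfin T HT) as [l Hl].
  exists l; intro x; rewrite HS; apply Hl.
Qed.

Definition gens (S : BMcar A M) : list M :=
  proj1_sig (constructive_indefinite_description _ (BM_gens S)).

Lemma gens_spec S x : proj1_sig S x <-> gen (gens S) x.
Proof. exact (proj2_sig (constructive_indefinite_description _ (BM_gens S)) x). Qed.

Definition sfun (S : BMcar A M) : N := tjoin (gens S).

Lemma sfun_spec S l : (forall x, proj1_sig S x <-> gen l x) -> sfun S = tjoin l.
Proof. intro H; apply tjoin_gen; intro x; rewrite <- H; symmetry; apply gens_spec. Qed.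

Lemma sfun_sec S : p (sfun S) = S.
Proof.
  apply BM_ext; intro x; unfold sfun; rewrite p_tjoin, <- BM_lower.
  apply down_ext; intro y; symmetry; apply gens_spec.
Qed.

Lemma sfun_zero : sfun (BMzero A M) = bz N.
Proof.
  rewrite (sfun_spec _ nil); [reflexivity|]; intro x; simpl; rewrite gen_nil; split.
  - intros [y [Hy Hxy]]; apply gen_nil in Hy; subst y; apply ple_pt, Hxy.
  - intros ->; exists (Mpt M); split; [apply gen_pt | apply ple_refl].
Qed.

Lemma sfun_join S T : sfun (BMjoin A M S T) = bj N (sfun S) (sfun T).
Proof.
  rewrite (sfun_spec _ (gens S ++ gens T)); [apply tjoin_app|].
  intro x; simpl; rewrite gen_app, <- !gens_spec; reflexivity.
Qed.

Lemma sfun_act I S : sfun (BMact A M I S) = bact N I (sfun S).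
Proof.
  destruct (BA_gens I) as [k ->]; unfold sfun at 2; rewrite bact_tjoin.
  apply sfun_spec; intro x; rewrite BMact_saturated by exact Hsat.
  exact (actset_gen M _ k _ _ (fun _ => iff_refl _) (gens_spec S) x).
Qed.

Lemma section_of_lift : exists s : BM M -> N, BMod_hom s /\ forall y, p (s y) = y.
Proof.
  exists sfun; split; [split; [apply sfun_zero | split; [apply sfun_join | apply sfun_act]] | apply sfun_sec].
Qed.

End Backward.

Theorem mainTheorem13 (A : F1Pair) (M : POMod A) :
  AMod_projective (pmod M) ->
  (BMod_projective (BM M) <-> lower_finite M /\ lower_saturated M).
Proof.
  intro HPM; split; [apply lower_finite_saturated_of_projective|].
  intros [Hfin Hsat] N p Hp Hsurj.
  destruct (lift_of_projective M N p Hp HPM Hsurj) as [t [Ht Hpt]].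
  exact (section_of_lift M N p Hp t Ht Hpt Hfin Hsat).
Qed.
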